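(* Let $(X_i)_{i\in I}$ be any family of objects of $\mathsf{RSRel}$. Then $P\left(\prod_{i\in I}X_i\right)=\prod_{i\in I}PX_i$, where the product in $\mathsf{RSRel}$ is the cartesian product of carriers with $(x_i)_i\sim(x'_i)_i$ iff $x_i\sim x'_i$ for all $i$, and the product in $\mathsf{Met}$ is the cartesian product of carriers with metric $d((x_i)_i,(x'_i)_i)=\sup_{i\in I}d_{PX_i}(x_i,x'_i)$.
   Context: $\mathsf{RSRel}$: sets with a reflexive symmetric relation. $\mathsf{Met}$: extended pseudo-metric spaces (distances in $[0,\infty]$). For $X\in\mathsf{RSRel}$, $PX$ is $|X|$ with the path metric: $d(x,x')$ is the least $k$ such that there is a chain $x=x_0\sim x_1\sim\dots\sim x_k=x'$, or $\infty$ if no such chain exists. *)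

From HB Require Import structures.
From mathcomp Require Import all_boot all_order all_algebra.
From mathcomp Require Import all_classical all_reals ereal.
Set Implicit Arguments. Unset Strict Implicit. Unset Printing Implicit Defensive.
Import Order.TTheory GRing.Theory Num.Theory.
Local Open Scope classical_set_scope.
Local Open Scope ereal_scope.

Record rsrel := RSRel {
  carrier : Type;
  rel : carrier -> carrier -> Prop;
  rel_refl : forall x, rel x x;
  rel_sym : forall x y, rel x y -> rel y x }.

Definition rsprod_rel (I : Type) (X : I -> rsrel)
  (x y : forall i, carrier (X i)) : Prop := forall i, rel (x i) (y i).
Arguments rsprod_rel : clear implicits.

Lemma rsprod_refl (I : Type) (X : I -> rsrel) x : rsprod_rel I X x x.
Proof. by move=> i; apply: rel_refl. Qed.

Lemma rsprod_sym (I : Type) (X : I -> rsrel) x y :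
  rsprod_rel I X x y -> rsprod_rel I X y x.
Proof. by move=> H i; apply: rel_sym. Qed.

Arguments rsprod_refl : clear implicits.
Arguments rsprod_sym : clear implicits.

Definition rsprod (I : Type) (X : I -> rsrel) : rsrel :=
  @RSRel (forall i, carrier (X i)) (rsprod_rel I X) (rsprod_refl I X) (rsprod_sym I X).

Definition chain (X : rsrel) (k : nat) (x x' : carrier X) : Prop :=
  exists f : nat -> carrier X,
    f 0%N = x /\ f k = x' /\ forall j, (j < k)%N -> rel (f j) (f j.+1).

(* Path metric of PX: least k admitting a chain (infimum of the set of such k),
   +oo when no chain exists (ereal_inf of the empty set is +oo). *)
Definition path_dist (R : realType) (X : rsrel) (x x' : carrier X) : \bar R :=
  ereal_inf [set (k%:R)%:E | k in [set k : nat | chain k x x']].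

(* Supremum in [0, +oo] of a family of distances (the sup-metric of the
   product in Met); 0 is included so that the empty product gets distance 0. *)
Definition sup_dist (R : realType) (I : Type) (d : I -> \bar R) : \bar R :=
  ereal_sup ([set 0] `|` range d).

(* A chain of length n in the product is the same as a family of chains of
   length n in the factors, and a chain can be padded to any greater length by
   reflexivity; hence the product distance is at most n exactly when every
   coordinate distance is. Since path distances lie in N u {+oo}, a real bound
   r on all coordinates already gives the integral bound floor(r). *)

From Pilot Require Import Defs.
From mathcomp Require Import all_boot all_order all_algebra.
From mathcomp Require Import all_classical all_reals ereal.
Import Order.TTheory GRing.Theory Num.Theory.
Local Open Scope classical_set_scope.
Local Open Scope ereal_scope.

Lemma chainW (X : rsrel) k m (x y : carrier X) :
  (k <= m)%N -> chain k x y -> chain m x y.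
Proof.
move=> km [f [f0 [fk fr]]].
exists (fun j => f (minn j k)); split; first by rewrite min0n.
split; first by rewrite (minn_idPr km).
move=> j jm /=; case: (ltnP j k) => jk.
  by rewrite (minn_idPl jk); apply: fr.
by rewrite (minn_idPr (leqW jk)); apply: rel_refl.
Qed.

Lemma chain_map (X Y : rsrel) (h : carrier X -> carrier Y) k (x y : carrier X) :
  (forall u v, Defs.rel u v -> Defs.rel (h u) (h v)) ->
  chain k x y -> chain k (h x) (h y).
Proof.
move=> hrel [f [f0 [fk fr]]]; exists (h \o f).
by split; [rewrite /= f0 | split; [rewrite /= fk | move=> j /fr /hrel]].
Qed.

Lemma chain_rsprod (I : Type) (X : I -> rsrel) k (x y : carrier (rsprod X)) :
  (forall i, chain k (x i) (y i)) -> chain k x y.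
Proof.
move=> /(_ _)/cid-/all_sig[g g_chain].
exists (fun j i => g i j); split.
  by apply: functional_extensionality_dep => i; case: (g_chain i).
split; first by apply: functional_extensionality_dep => i; case: (g_chain i) => _ [].
by move=> j jk i; case: (g_chain i) => _ [_]; apply.
Qed.

Section PathDist.

Variable R : realType.

Lemma path_dist_ge0 (X : rsrel) (x y : carrier X) : 0 <= path_dist R x y.
Proof. by apply: le_ereal_inf_tmp => _ [k _ <-]; rewrite lee_fin. Qed.

Lemma path_dist_le_chain (X : rsrel) k (x y : carrier X) :
  chain k x y -> path_dist R x y <= (k%:R)%:E.
Proof. by move=> xy; apply: ereal_inf_lbound; exists k. Qed.

Lemma chain_path_dist_le (X : rsrel) (r : R) (x y : carrier X) :
  (0 <= r)%R -> path_dist R x y <= r%:E -> chain (Num.truncn r) x y.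
Proof.
move=> r0 dxy; apply: contrapT => no_chain; move: dxy; apply/negP; rewrite -ltNge.
apply: (@lt_le_trans _ _ ((Num.truncn r).+1%:R)%:E).
  by rewrite lte_fin; case/andP: (truncn_itv r0).
apply: le_ereal_inf_tmp => _ [k xy_k <-]; rewrite lee_fin ler_nat.
by case: ltnP => // kr; case: no_chain; apply: chainW xy_k.
Qed.

Lemma path_dist_map_le (X Y : rsrel) (h : carrier X -> carrier Y) (x y : carrier X) :
  (forall u v, Defs.rel u v -> Defs.rel (h u) (h v)) ->
  path_dist R (h x) (h y) <= path_dist R x y.
Proof.
move=> hrel; apply: le_ereal_inf_tmp => _ [k xy_k <-].
by apply: path_dist_le_chain; apply: chain_map xy_k.
Qed.

Lemma path_dist_rsprod_le (I : Type) (X : I -> rsrel) (r : R)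
    (x y : carrier (rsprod X)) :
  (0 <= r)%R -> (forall i, path_dist R (x i) (y i) <= r%:E) ->
  path_dist R x y <= r%:E.
Proof.
move=> r0 dxy; apply: (@le_trans _ _ ((Num.truncn r)%:R)%:E).
  by apply/path_dist_le_chain/chain_rsprod => i; exact: chain_path_dist_le.
by rewrite lee_fin; case/andP: (truncn_itv r0).
Qed.

End PathDist.

Theorem lemma3 (R : realType) (I : Type) (X : I -> rsrel)
  (x x' : carrier (rsprod X)) :
  path_dist R x x' = sup_dist (fun i => path_dist R (x i) (x' i)).
Proof.
apply/eqP; rewrite eq_le; apply/andP; split; last first.
  apply: ge_ereal_sup => _ [->|[i _ <-]]; first exact: path_dist_ge0.
  by apply: (@path_dist_map_le R (rsprod X) (X i) (fun u => u i)) => u v; apply.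
have sup_ge0 : 0 <= sup_dist (fun i => path_dist R (x i) (x' i)).
  by apply: ereal_sup_ubound; left.
have coord_le i :
    path_dist R (x i) (x' i) <= sup_dist (fun i => path_dist R (x i) (x' i)).
  by apply: ereal_sup_ubound; right; exists i.
move: sup_ge0 coord_le; case: sup_dist => [r| |] // r0 coord_le; last by rewrite leey.
by apply: path_dist_rsprod_le; rewrite // -lee_fin.
Qed.
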